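(* Let $G$ be a connected simple cubic graph such that the Petersen graph $P$ admits a $G$-coloring. Then $G$ is isomorphic to $P$.
   Context: A simple graph has no loops and no parallel edges; a cubic graph is $3$-regular. For a graph $X$ and vertex $x$, $\partial_X(x)$ denotes the set of edges of $X$ incident to $x$. For cubic graphs $G, H$ (loopless, parallel edges allowed), an $H$-coloring of $G$ is a map $f: E(G)\to E(H)$ such that for every vertex $x$ of $G$ there is a vertex $y$ of $H$ with $f(\partial_G(x))=\partial_H(y)$. $P$ denotes the Petersen graph. *)

From mathcomp Require Import all_boot.
Set Implicit Arguments. Unset Strict Implicit. Unset Printing Implicit Defensive.

Definition simple_graph (V : finType) (e : rel V) : Prop :=
  symmetric e /\ irreflexive e.

Definition cubic (V : finType) (e : rel V) : Prop :=
  forall x : V, #|[set y | e x y]| = 3.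

Definition connected_graph (V : finType) (e : rel V) : Prop :=
  forall x y : V, connect e x y.

Definition edges (V : finType) (e : rel V) : {set {set V}} :=
  [set [set x; y] | x in V, y in V & e x y].

Definition dedges (V : finType) (e : rel V) (x : V) : {set {set V}} :=
  [set E in edges e | x \in E].

(* An H-coloring of G (both simple): f : E(G) -> E(H) with
   f(partial_G(x)) = partial_H(y) for some y, for every vertex x of G.
   f is given as a total function on sets; only its values on E(G) matter. *)
Definition H_coloring (VG : finType) (eG : rel VG) (VH : finType) (eH : rel VH)
  (f : {set VG} -> {set VH}) : Prop :=
  (forall E, E \in edges eG -> f E \in edges eH) /\
  forall x : VG, exists y : VH, f @: dedges eG x = dedges eH y.

Definition admits_coloring (VG : finType) (eG : rel VG) (VH : finType) (eH : rel VH) : Prop :=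
  exists f : {set VG} -> {set VH}, H_coloring eG eH f.

(* Petersen graph: Kneser graph K(5,2). *)
Definition petV : finType := {A : {set 'I_5} | #|A| == 2}.
Definition petE : rel petV := fun A B => [disjoint val A & val B].

Definition isomorphic (V1 : finType) (e1 : rel V1) (V2 : finType) (e2 : rel V2) : Prop :=
  exists phi : V1 -> V2, bijective phi /\ forall x y, e2 (phi x) (phi y) = e1 x y.

(* A G-colouring f of the Petersen graph P assigns to every vertex x of P a
   vertex g x of G with f(∂x) = ∂(g x); the heart of the proof is that g is
   injective.  Number the vertices of P and record, for each of them, the first
   vertex with the same image under g and the position of each of its edge
   colours among the colours at that vertex.  This pattern obeys local rules
   (the two halves of an edge carry the same colour; an edge xu with g x <> g u
   is coloured {g x, g u}), and an exhaustive search over the canonical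
   patterns shows that only the injective one obeys them.  An injective g is a
   homomorphism that is bijective on neighbourhoods, so, G being connected, it
   is an isomorphism. *)

From mathcomp Require Import all_boot.
Set Implicit Arguments. Unset Strict Implicit. Unset Printing Implicit Defensive.

Lemma set2_inj_r (T : finType) (x y z : T) : [set x; y] = [set x; z] -> y != x -> y = z.
Proof.
move=> Exyz yNx; have : y \in [set x; z] by rewrite -Exyz in_set2 eqxx orbT.
by rewrite in_set2 (negbTE yNx) => /eqP.
Qed.

Lemma card_set3_neq (T : finType) (a b c : T) : #|[set a; b; c]| = 3 ->
  [/\ a != b, a != c & b != c].
Proof.
move=> card3; have not_sub2 x y : ~ [set a; b; c] \subset [set x; y].
  by move/subset_leq_card; rewrite card3 cards2; case: (_ != _).
split; apply/negP => /eqP E.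
- by apply: (not_sub2 b c); apply/subsetP => z; rewrite !inE E; case: (z == b).
- by apply: (not_sub2 b c); apply/subsetP => z; rewrite !inE E; case: (z == b); case: (z == c).
- by apply: (not_sub2 a c); apply/subsetP => z; rewrite !inE E; case: (z == a); case: (z == c).
Qed.

Lemma iota_allP n (p : pred nat) : all p (iota 0 n) -> forall i, i < n -> p i.
Proof. by move=> /allP p_all i lt_in; apply: p_all; rewrite mem_iota. Qed.

Lemma disjoint_set2 (T : finType) (a b : T) (B : {pred T}) :
  [disjoint [set a; b] & B] = (a \notin B) && (b \notin B).
Proof.
apply/pred0P/andP => [noAB | [aNB bNB] x /=].
  by split; apply/negP => xB; [move: (noAB a) | move: (noAB b)];
    rewrite /= in_set2 eqxx ?orbT xB.
rewrite in_set2; apply/negP => /andP [/orP [] /eqP -> ];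
  by rewrite ?(negbTE aNB) ?(negbTE bNB).
Qed.

Section Edges.

Variables (T : finType) (r : rel T).

Lemma edgesP E : reflect (exists x y, r x y /\ E = [set x; y]) (E \in edges r).
Proof.
apply: (iffP imset2P) => [[x y _] | [x [y [rxy ->]]]].
  by rewrite inE => rxy ->; exists x, y.
by exists x y => //; rewrite inE.
Qed.

Lemma edges_set2 x y : r x y -> [set x; y] \in edges r.
Proof. by move=> rxy; apply/edgesP; exists x, y. Qed.

Lemma edges_set2_eq E x y :
  E \in edges r -> x \in E -> y \in E -> x != y -> E = [set x; y].
Proof.
case/edgesP => [a [b [_ ->]]]; rewrite !in_set2.
by case/orP => /eqP ->; case/orP => /eqP ->; rewrite ?eqxx // => _; rewrite setUC.
Qed.

Hypothesis r_sym : symmetric r.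

Lemma edges_rel x y : x != y -> [set x; y] \in edges r -> r x y.
Proof.
move=> xNy /edgesP [a [b [rab Exy]]].
have xab : x \in [set a; b] by rewrite -Exy in_set2 eqxx.
have yab : y \in [set a; b] by rewrite -Exy in_set2 eqxx orbT.
move: xab yab xNy; rewrite !in_set2.
by case/orP => /eqP ->; case/orP => /eqP ->; rewrite ?eqxx // r_sym.
Qed.

Lemma dedgesP x E : reflect (exists y, r x y /\ E = [set x; y]) (E \in dedges r x).
Proof.
rewrite inE; apply: (iffP andP) => [[/edgesP [a [b [rab ->]]]] | [y [rxy ->]]].
  by rewrite in_set2 => /orP [] /eqP ->; [exists b | exists a; rewrite r_sym setUC].
by split; [apply: edges_set2 | rewrite in_set2 eqxx].
Qed.

Lemma set2_dedges x y : r x y -> [set x; y] \in dedges r x.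
Proof. by move=> rxy; apply/dedgesP; exists y. Qed.

Lemma set2_dedges_r x y : r x y -> [set x; y] \in dedges r y.
Proof. by move=> rxy; rewrite setUC; apply/set2_dedges; rewrite r_sym. Qed.

End Edges.

Lemma dedges_card (T : finType) (r : rel T) x :
  simple_graph r -> cubic r -> #|dedges r x| = 3.
Proof.
move=> [r_sym r_irr] r_cub; rewrite -(r_cub x).
have -> : dedges r x = (fun y => [set x; y]) @: [set y | r x y].
  apply/setP => E; apply/(dedgesP r_sym)/imsetP => [[y [rxy ->]] | [y]].
    by exists y; rewrite ?inE.
  by rewrite inE => rxy ->; exists y.
apply: card_in_imset => y z; rewrite !inE => rxy _ /set2_inj_r -> //.
by apply/eqP => Eyx; move: rxy; rewrite Eyx r_irr.
Qed.

Lemma coloring_vertex_map (U V : finType) (eU : rel U) (eV : rel V) f :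
  H_coloring eU eV f -> exists g : U -> V, forall x, f @: dedges eU x = dedges eV (g x).
Proof.
case=> _ fstar; have fstar' x : exists y, f @: dedges eU x == dedges eV y.
  by have [y Ey] := fstar x; exists y; apply/eqP.
by exists (fun x => xchoose (fstar' x)) => x; apply/eqP; exact: (xchooseP (fstar' x)).
Qed.

Section ColoringVertexMap.

Variables (U V : finType) (eU : rel U) (eV : rel V).
Variables (f : {set U} -> {set V}) (g : U -> V).
Hypotheses (U_simple : simple_graph eU) (V_simple : simple_graph eV).
Hypothesis f_star : forall x, f @: dedges eU x = dedges eV (g x).

Let eU_sym : symmetric eU. Proof. by case: U_simple. Qed.
Let eV_sym : symmetric eV. Proof. by case: V_simple. Qed.

Lemma coloring_edge_dedges x y : eU x y -> f [set x; y] \in dedges eV (g x).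
Proof. by move=> xy; rewrite -f_star; apply: imset_f; exact: set2_dedges. Qed.

Lemma coloring_edge_dedges_r x y : eU x y -> f [set x; y] \in dedges eV (g y).
Proof. by move=> xy; rewrite -f_star; apply: imset_f; exact: set2_dedges_r. Qed.

Lemma coloring_edge_split x y : eU x y -> g x != g y ->
  f [set x; y] = [set g x; g y] /\ eV (g x) (g y).
Proof.
move=> xy gxNgy.
move: (coloring_edge_dedges xy) (coloring_edge_dedges_r xy).
rewrite !inE => /andP [fE gxE] /andP [_ gyE].
have Ef := edges_set2_eq fE gxE gyE gxNgy.
by split => //; apply: (edges_rel eV_sym gxNgy); rewrite -Ef.
Qed.

Hypothesis g_inj : injective g.

Let g_neq x y : eU x y -> g x != g y.
Proof.
move=> xy; apply/negP => /eqP /g_inj Exy.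
by move: xy; rewrite Exy (proj2 U_simple).
Qed.

Lemma coloring_lift x z : eV (g x) z -> exists2 y, eU x y & g y = z.
Proof.
move=> gxz; have := set2_dedges eV_sym gxz; rewrite -f_star.
case/imsetP => _ /(dedgesP eU_sym) [y [xy ->]] /esym; rewrite (coloring_edge_split xy (g_neq xy)).1.
by move=> /set2_inj_r Eyz; exists y => //; apply: Eyz; rewrite eq_sym g_neq.
Qed.

Lemma coloring_isomorphic : connected_graph eV -> U -> isomorphic eV eU.
Proof.
move=> V_conn u0.
have g_surj z : exists x, g x = z.
  have /connectP [p p_path ->] := V_conn (g u0) z.
  elim: p u0 p_path => [|a p IHp] x /=; first by exists x.
  case/andP => gxa p_path; have [y _ Eya] := coloring_lift gxa.
  by rewrite -Eya in p_path *; exact: IHp.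
pose phi z := odflt u0 [pick x | g x == z].
have g_phi z : g (phi z) = z.
  rewrite /phi; case: pickP => [x /eqP // | no_pre].
  by have [x Ex] := g_surj z; move: (no_pre x); rewrite Ex eqxx.
have phi_g x : phi (g x) = x by apply: g_inj; rewrite g_phi.
exists phi; split; first by exists g.
move=> a b; rewrite -{2}(g_phi a) -{2}(g_phi b).
apply/idP/idP => [xy | /coloring_lift [y ay /g_inj Eyb]]; last by rewrite -Eyb.
by case: (coloring_edge_split xy (g_neq xy)).
Qed.

End ColoringVertexMap.

Lemma petE_sym : symmetric petE.
Proof. by move=> x y; rewrite /petE disjoint_sym. Qed.

Lemma petE_irr : irreflexive petE.
Proof.
case=> X cardX; rewrite /petE /=; apply/negP => disjXX.
have /cards2P [a [b [_ EX]]] := cardX.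
have aX : a \in X by rewrite EX in_set2 eqxx.
by have := disjointFr disjXX aX; rewrite aX.
Qed.

Lemma petE_simple : simple_graph petE.
Proof. by split; [exact: petE_sym | exact: petE_irr]. Qed.

Definition pet_pairs : seq (nat * nat) :=
  [:: (0,1); (2,3); (2,4); (3,4); (0,4); (1,4); (0,3); (1,3); (0,2); (1,2)].
Definition pet_nbr_table : seq (seq nat) :=
  [:: [:: 1; 2; 3]; [:: 0; 4; 5]; [:: 0; 6; 7]; [:: 0; 8; 9]; [:: 1; 7; 9];
      [:: 1; 6; 8]; [:: 2; 5; 9]; [:: 2; 4; 8]; [:: 3; 5; 7]; [:: 3; 4; 6]].
Definition pet_nbr (i t : nat) : nat := nth 0 (nth [::] pet_nbr_table i) t.

Definition pair_set (a b : nat) : {set 'I_5} := [set inord a; inord b].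

Lemma inord5_eq a b : a < 5 -> b < 5 -> (inord a == inord b :> 'I_5) = (a == b).
Proof. by move=> a5 b5; rewrite -(inj_eq val_inj) /= !inordK. Qed.

Lemma card_pair_set a b : a < 5 -> b < 5 -> a != b -> #|pair_set a b| == 2.
Proof. by move=> a5 b5 aNb; rewrite /pair_set cards2 inord5_eq ?aNb. Qed.

Definition pet_vertex0 : petV := Sub (pair_set 0 1) (@card_pair_set 0 1 isT isT isT).
Definition pet_vertex (i : nat) : petV :=
  let p := nth (0, 0) pet_pairs i in insubd pet_vertex0 (pair_set p.1 p.2).

Definition pet_pair_ok (p : nat * nat) := [&& p.1 < 5, p.2 < 5 & p.1 != p.2].

Lemma pet_pairs_ok i : i < 10 -> pet_pair_ok (nth (0, 0) pet_pairs i).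
Proof. exact: (iota_allP (p := fun i => pet_pair_ok (nth (0, 0) pet_pairs i))). Qed.

Lemma val_pet_vertex i : i < 10 ->
  val (pet_vertex i) = pair_set (nth (0, 0) pet_pairs i).1 (nth (0, 0) pet_pairs i).2.
Proof.
move=> i10; rewrite /pet_vertex insubdK //.
by case/and3P: (pet_pairs_ok i10) => *; apply: card_pair_set.
Qed.

Definition pairs_disjoint (p q : nat * nat) : bool :=
  [&& p.1 != q.1, p.1 != q.2, p.2 != q.1 & p.2 != q.2].

Lemma disjoint_pair_set p q : pet_pair_ok p -> pet_pair_ok q ->
  [disjoint pair_set p.1 p.2 & pair_set q.1 q.2] = pairs_disjoint p q.
Proof.
case/and3P => ? ? _ /and3P [? ? _].
by rewrite /pair_set disjoint_set2 !in_set2 !inord5_eq // /pairs_disjoint !negb_or -!andbA.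
Qed.

Lemma pet_nbr_table_ok : all (fun i => all (fun j =>
   pairs_disjoint (nth (0, 0) pet_pairs i) (nth (0, 0) pet_pairs j)
   == (j \in nth [::] pet_nbr_table i)) (iota 0 10)) (iota 0 10).
Proof. by []. Qed.

Lemma petE_pet_vertex i j : i < 10 -> j < 10 ->
  petE (pet_vertex i) (pet_vertex j) = (j \in nth [::] pet_nbr_table i).
Proof.
move=> i10 j10; rewrite /petE !val_pet_vertex // disjoint_pair_set ?pet_pairs_ok //.
by apply/eqP; move: j j10; apply: iota_allP; exact: (iota_allP pet_nbr_table_ok).
Qed.

Lemma pet_pairs_cover : all (fun a => all (fun b => (a != b) ==>
  has (fun i => (nth (0, 0) pet_pairs i == (a, b)) || (nth (0, 0) pet_pairs i == (b, a)))
      (iota 0 10)) (iota 0 5)) (iota 0 5).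
Proof. by []. Qed.

Lemma pet_vertex_onto (x : petV) : exists2 i, i < 10 & x = pet_vertex i.
Proof.
case: x => X cardX; have /cards2P [a [b [aNb EX]]] := cardX.
have := iota_allP (iota_allP pet_pairs_cover (ltn_ord a)) (ltn_ord b).
rewrite (inj_eq val_inj) aNb => /hasP [i]; rewrite mem_iota => i10 Ei.
exists i => //; apply: val_inj; rewrite val_pet_vertex //= EX /pair_set.
by case/orP: Ei => /eqP -> /=; rewrite !inord_val // setUC.
Qed.

Lemma pet_nbr_table_rows : all (fun i =>
  (nth [::] pet_nbr_table i == [:: pet_nbr i 0; pet_nbr i 1; pet_nbr i 2])
  && all (fun t => pet_nbr i t < 10) (iota 0 3)) (iota 0 10).
Proof. by []. Qed.

Lemma pet_nbr_row i : i < 10 ->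
  nth [::] pet_nbr_table i = [:: pet_nbr i 0; pet_nbr i 1; pet_nbr i 2].
Proof. by move/(iota_allP pet_nbr_table_rows) => /andP [/eqP]. Qed.

Lemma pet_nbr_lt i t : i < 10 -> t < 3 -> pet_nbr i t < 10.
Proof. by move/(iota_allP pet_nbr_table_rows) => /andP [_ /iota_allP]; apply. Qed.

Lemma petE_pet_nbr i t : i < 10 -> t < 3 -> petE (pet_vertex i) (pet_vertex (pet_nbr i t)).
Proof.
move=> i10 t3; rewrite petE_pet_vertex ?pet_nbr_lt // pet_nbr_row //.
by case: t t3 => [|[|[|]]] //= _; rewrite !inE eqxx ?orbT.
Qed.

Lemma petE_pet_nbrP i y : i < 10 -> petE (pet_vertex i) y ->
  exists2 t, t < 3 & y = pet_vertex (pet_nbr i t).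
Proof.
move=> i10; have [j j10 ->] := pet_vertex_onto y.
rewrite petE_pet_vertex // pet_nbr_row // !inE.
by case/or3P => /eqP ->; [exists 0 | exists 1 | exists 2].
Qed.

Definition pet_edge (i t : nat) : {set petV} := [set pet_vertex i; pet_vertex (pet_nbr i t)].

Lemma pet_edge_dedges i t : i < 10 -> t < 3 -> pet_edge i t \in dedges petE (pet_vertex i).
Proof. by move=> i10 t3; apply: (set2_dedges petE_sym); apply: petE_pet_nbr. Qed.

Lemma pet_dedges i : i < 10 ->
  dedges petE (pet_vertex i) = [set pet_edge i 0; pet_edge i 1; pet_edge i 2].
Proof.
move=> i10; apply/setP => E; apply/idP/idP.
  case/(dedgesP petE_sym) => y [/(petE_pet_nbrP i10) [t t3 ->] ->].
  by rewrite !inE; case: t t3 => [|[|[|]]] //= _; rewrite eqxx ?orbT.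
by rewrite !in_setU !in_set1 -orbA => /or3P [] /eqP ->; apply: pet_edge_dedges.
Qed.

(* A pattern lists, for the vertices [0], ..., [9] of P, entries
   [(r, (s0, s1, s2))]: [r] is the first vertex with the same image, and [st]
   the position of the colour of [pet_edge i t] among the colours at [r]. *)
Definition entry := (nat * (nat * nat * nat))%type.
Definition entry0 : entry := (0, (0, 0, 0)).
Definition entry_slot (a : entry) (t : nat) : nat :=
  match t with 0 => a.2.1.1 | 1 => a.2.1.2 | _ => a.2.2 end.

Definition dart_pair := (nat * nat * nat * nat)%type.

(* The darts [(i, t)] and [(j, t')] sit at vertices with the same image.  If
   they are the two halves of one edge, they carry the same colour; if neither
   edge is collapsed, their colours are {g i, g u} and {g i, g w}, which agree
   exactly when g u = g w. *)
Definition consistent (s : seq entry) (d : dart_pair) : bool :=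
  let: (i, j, t, t') := d in
  let u := pet_nbr i t in let w := pet_nbr j t' in
  let a k := nth entry0 s k in
  ((a i).1 == (a j).1) ==>
  [&& (u == j) && (w == i) ==> (entry_slot (a i) t == entry_slot (a j) t')
    & ((a u).1 != (a i).1) && ((a w).1 != (a j).1) ==>
      (((a u).1 == (a w).1) == (entry_slot (a i) t == entry_slot (a j) t'))].

Definition dart_top (d : dart_pair) : nat :=
  let: (i, j, t, t') := d in maxn (maxn i j) (maxn (pet_nbr i t) (pet_nbr j t')).

Definition dart_pairs : seq dart_pair :=
  flatten [seq flatten [seq [seq (i, j, t, t') | t <- iota 0 3, t' <- iota 0 3]
    | j <- iota 0 10] | i <- iota 0 10].

Definition dart_pairs_at : seq (seq dart_pair) :=
  Eval vm_compute in [seq [seq d <- dart_pairs | dart_top d == n] | n <- iota 0 10].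

(* The constraints on shorter prefixes have already been checked. *)
Definition prefix_ok (s : seq entry) : bool :=
  all (consistent s) (nth [::] dart_pairs_at (size s).-1).

Definition perms3 : seq (nat * nat * nat) :=
  [:: (0,1,2); (0,2,1); (1,0,2); (1,2,0); (2,0,1); (2,1,0)].

Lemma mem_perms3 a b c : a < 3 -> b < 3 -> c < 3 -> a != b -> a != c -> b != c ->
  (a, b, c) \in perms3.
Proof. by case: a => [|[|[|]]] //; case: b => [|[|[|]]] //; case: c => [|[|[|]]]. Qed.

(* A new vertex is its own representative, and then its slots are the
   identity, or it joins an earlier representative through a permutation. *)
Definition candidates (s : seq entry) : seq entry :=
  (size s, (0, 1, 2)) ::
  [seq (r, p) | r <- [seq r <- iota 0 (size s) | (nth entry0 s r).1 == r], p <- perms3].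

Definition trivial_pattern (s : seq entry) : bool :=
  all (fun i => (nth entry0 s i).1 == i) (iota 0 10).

Fixpoint search (n : nat) (s : seq entry) : bool :=
  if n is n'.+1 then
    all (fun a => let s' := rcons s a in if prefix_ok s' then search n' s' else true)
      (candidates s)
  else trivial_pattern s.

Lemma search_ok : search 10 [::].
Proof. vm_cast_no_check (erefl true). Qed.

Definition dart_in_range (d : dart_pair) : bool :=
  let: (i, j, t, t') := d in [&& i < 10, j < 10, t < 3 & t' < 3].

Lemma dart_pairs_at_ok : all (fun n => all (fun d => (dart_top d == n) && dart_in_range d)
  (nth [::] dart_pairs_at n)) (iota 0 10).
Proof. by vm_compute. Qed.

Lemma mem_dart_pairs_at n d :
  d \in nth [::] dart_pairs_at n -> dart_top d = n /\ dart_in_range d.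
Proof.
case: (ltnP n 10) => [n10 | n_ge10]; last by rewrite nth_default.
by move/allP: (iota_allP dart_pairs_at_ok n10) => d_ok /d_ok /andP [/eqP].
Qed.

Lemma consistent_take k s d : dart_top d < k -> consistent (take k s) d = consistent s d.
Proof.
case: d => [[[i j] t] t']; rewrite /dart_top /consistent !gtn_max.
by case/andP => /andP [ik jk] /andP [uk wk]; rewrite !nth_take.
Qed.

Lemma search_sound (s : seq entry) : size s = 10 ->
  (forall d, dart_in_range d -> consistent s d) ->
  (forall k, k < 10 -> nth entry0 s k \in candidates (take k s)) ->
  trivial_pattern s.
Proof.
move=> s10 s_consistent s_cand.
suff search_prefix n k : n + k = 10 -> search n (take k s) -> trivial_pattern s.
  by apply: (search_prefix 10 0) => //; rewrite take0; exact: search_ok.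
elim: n k => [|n IHn] k; first by rewrite add0n => ->; rewrite -{1}s10 take_size.
move=> nk_10 /allP search_next.
have k10 : k < 10 by rewrite -nk_10 addSn ltnS leq_addl.
have size_k : size (take k s) = k by rewrite size_take s10 k10.
have := search_next _ (s_cand k k10); rewrite /= -take_nth ?s10 //.
have -> : prefix_ok (take k.+1 s).
  apply/allP => d; rewrite size_takel ?s10 // => /mem_dart_pairs_at [top_d d_range].
  by rewrite consistent_take ?top_d // s_consistent.
by apply: IHn; rewrite addnS.
Qed.

Section PetersenColoring.

Variables (V : finType) (e : rel V) (f : {set petV} -> {set V}) (g : petV -> V).
Hypotheses (e_simple : simple_graph e) (e_cubic : cubic e).
Hypothesis f_star : forall x, f @: dedges petE x = dedges e (g x).

Definition col (i t : nat) : {set V} := f (pet_edge i t).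
Definition cols (i : nat) : seq {set V} := [:: col i 0; col i 1; col i 2].

Lemma nth_cols s0 i t : t < 3 -> nth s0 (cols i) t = col i t.
Proof. by case: t => [|[|[|]]]. Qed.

Lemma dedges_g_cols i : i < 10 -> dedges e (g (pet_vertex i)) =i cols i.
Proof.
move=> i10 E; rewrite -f_star pet_dedges // !imsetU !imset_set1.
by rewrite !inE -orbA.
Qed.

Lemma uniq_cols i : i < 10 -> uniq (cols i).
Proof.
move=> i10; have card3 : #|[set col i 0; col i 1; col i 2]| = 3.
  rewrite -(dedges_card (g (pet_vertex i)) e_simple e_cubic) -f_star pet_dedges //.
  by rewrite !imsetU !imset_set1.
by rewrite /= !inE !negb_or; case: (card_set3_neq card3) => -> -> ->.
Qed.

Definition vertex_images : seq V := [seq g (pet_vertex j) | j <- iota 0 10].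

Definition rep (i : nat) : nat := index (g (pet_vertex i)) vertex_images.

Lemma nth_vertex_images i v0 : i < 10 -> nth v0 vertex_images i = g (pet_vertex i).
Proof. by move=> i10; rewrite (nth_map 0) ?size_iota // nth_iota. Qed.

Lemma rep_le i : i < 10 -> rep i <= i.
Proof.
by move=> i10; rewrite /rep -(nth_vertex_images (g (pet_vertex i)) i10) index_nth ?size_map ?size_iota.
Qed.

Lemma rep_lt i : i < 10 -> rep i < 10.
Proof. by move=> i10; apply: leq_ltn_trans (rep_le i10) i10. Qed.

Lemma g_rep i : i < 10 -> g (pet_vertex (rep i)) = g (pet_vertex i).
Proof.
move=> i10; rewrite -(nth_vertex_images (g (pet_vertex i)) (rep_lt i10)) nth_index //.
by apply/mapP; exists i; rewrite ?mem_iota.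
Qed.

Lemma eq_rep i j : i < 10 -> j < 10 -> (rep i == rep j) = (g (pet_vertex i) == g (pet_vertex j)).
Proof.
move=> i10 j10; apply/eqP/eqP => [Eij | Eg]; last by rewrite /rep Eg.
by rewrite -g_rep // Eij g_rep.
Qed.

Lemma rep_idem i : i < 10 -> rep (rep i) = rep i.
Proof. by move=> i10; apply/eqP; rewrite eq_rep ?rep_lt // g_rep. Qed.

Definition slot (i t : nat) : nat := index (col i t) (cols (rep i)).

Lemma col_in_cols_rep i t : i < 10 -> t < 3 -> col i t \in cols (rep i).
Proof.
move=> i10 t3; rewrite -dedges_g_cols ?rep_lt // g_rep // dedges_g_cols //.
by rewrite -(nth_cols (col i t) i t3) mem_nth.
Qed.

Lemma slot_lt i t : i < 10 -> t < 3 -> slot i t < 3.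
Proof. by move=> i10 t3; rewrite /slot index_mem col_in_cols_rep. Qed.

Lemma col_slot i t : i < 10 -> t < 3 -> col (rep i) (slot i t) = col i t.
Proof.
by move=> i10 t3; rewrite -(nth_cols (col i t) _ (slot_lt i10 t3)) nth_index ?col_in_cols_rep.
Qed.

Lemma eq_slot i j t t' : i < 10 -> j < 10 -> t < 3 -> t' < 3 -> rep i = rep j ->
  (slot i t == slot j t') = (col i t == col j t').
Proof.
move=> i10 j10 t3 t'3 Erep; apply/eqP/eqP => [Eslot | Ecol]; last by rewrite /slot Erep Ecol.
by rewrite -(col_slot i10 t3) -(col_slot j10 t'3) Eslot Erep.
Qed.

Lemma slot_id i t : i < 10 -> t < 3 -> rep i = i -> slot i t = t.
Proof.
move=> i10 t3 Erep; rewrite /slot Erep -(nth_cols (col i t) i t3).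
by rewrite index_uniq ?uniq_cols.
Qed.

Lemma slots_perm i : i < 10 -> (slot i 0, slot i 1, slot i 2) \in perms3.
Proof.
move=> i10.
have [c01 c02 c12] : [/\ col i 0 != col i 1, col i 0 != col i 2 & col i 1 != col i 2].
  by have := uniq_cols i10; rewrite /= !inE !negb_or andbT => /andP [/andP [-> ->] ->].
by apply: mem_perms3; rewrite ?slot_lt ?eq_slot.
Qed.

Lemma col_split i t : i < 10 -> t < 3 -> rep (pet_nbr i t) != rep i ->
  col i t = [set g (pet_vertex i); g (pet_vertex (pet_nbr i t))].
Proof.
move=> i10 t3; rewrite eq_rep ?pet_nbr_lt // eq_sym => gNg.
exact: (coloring_edge_split petE_simple e_simple f_star (petE_pet_nbr i10 t3) gNg).1.
Qed.

Definition pattern : seq entry := [seq (rep i, (slot i 0, slot i 1, slot i 2)) | i <- iota 0 10].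

Lemma size_pattern : size pattern = 10.
Proof. by rewrite size_map size_iota. Qed.

Lemma nth_pattern i : i < 10 -> nth entry0 pattern i = (rep i, (slot i 0, slot i 1, slot i 2)).
Proof. by move=> i10; rewrite (nth_map 0) ?size_iota ?nth_iota. Qed.

Lemma pattern_slot i t : i < 10 -> t < 3 -> entry_slot (nth entry0 pattern i) t = slot i t.
Proof. by move=> i10; rewrite nth_pattern //; case: t => [|[|[|]]]. Qed.

Lemma pattern_consistent d : dart_in_range d -> consistent pattern d.
Proof.
case: d => [[[i j] t] t'] /and4P [i10 j10 t3 t'3].
have u10 := pet_nbr_lt i10 t3; have w10 := pet_nbr_lt j10 t'3.
rewrite /consistent !pattern_slot // !nth_pattern //=.
apply/implyP => /eqP Erep; rewrite eq_slot //; apply/andP; split.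
  by apply/implyP => /andP [/eqP Eu /eqP Ew]; rewrite /col /pet_edge Eu Ew setUC.
apply/implyP => /andP [uNi wNj]; rewrite (col_split i10 t3 uNi) (col_split j10 t'3 wNj).
have -> : g (pet_vertex j) = g (pet_vertex i) by apply/eqP; rewrite -eq_rep // Erep.
rewrite eq_rep //; apply/eqP; apply/eqP/eqP => [-> // | /set2_inj_r]; apply.
by rewrite -eq_rep.
Qed.

Lemma pattern_candidates k : k < 10 -> nth entry0 pattern k \in candidates (take k pattern).
Proof.
move=> k10; rewrite nth_pattern // /candidates size_takel ?size_pattern 1?ltnW //.
have [Erep | kNrep] := eqVneq (rep k) k; first by rewrite Erep !slot_id // mem_head.
rewrite inE; apply/orP; right; apply: allpairs_f; last exact: slots_perm.
have rep_lt_k : rep k < k by rewrite ltn_neqAle kNrep rep_le.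
by rewrite mem_filter mem_iota add0n rep_lt_k andbT nth_take // nth_pattern ?rep_lt //= rep_idem ?eqxx.
Qed.

Lemma petersen_coloring_injective : injective g.
Proof.
have reps_trivial := search_sound size_pattern pattern_consistent pattern_candidates.
have rep_id i : i < 10 -> rep i = i.
  by move=> i10; move: (iota_allP reps_trivial i10); rewrite nth_pattern // => /eqP.
move=> x y; have [i i10 ->] := pet_vertex_onto x; have [j j10 ->] := pet_vertex_onto y.
by move/eqP; rewrite -eq_rep // !rep_id // => /eqP ->.
Qed.

End PetersenColoring.

Theorem theorem5 (V : finType) (e : rel V) :
  simple_graph e -> cubic e -> connected_graph e ->
  admits_coloring petE e ->
  isomorphic e petE.
Proof.
move=> e_simple e_cubic e_conn [f /coloring_vertex_map [g f_star]].
have g_inj := petersen_coloring_injective e_simple e_cubic f_star.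
exact: (coloring_isomorphic petE_simple e_simple f_star g_inj e_conn pet_vertex0).
Qed.
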